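(* Let $H=(U,(A_1,\dots,A_m))$ be a harmonic set system with $|U|<m(m-2)$ and $m\ge 51$. Then one can partition $U=U^{(1)}\sqcup U^{(2)}$ such that the induced set systems $H^{(i)}=(U^{(i)},(A_1\cap U^{(i)},\dots,A_m\cap U^{(i)}))$, $i=1,2$, are harmonic and satisfy $H^{(1)}_I=H^{(2)}_{\emptyset,I}=\emptyset$ for every nonconsecutive $I\subseteq[m]$ of size $3$.
   Context: For a set system $G=(V,(B_1,\dots,B_m))$ and $I_1,I_2\subseteq[m]$, $G_{I_1,I_2}=\bigcap_{i\in I_1}B_i\cap\bigcap_{i\in I_2}(V\setminus B_i)$ (empty intersection $=V$), $G_I=G_{I,\emptyset}$. The run decomposition of a finite set $I$ of positive integers is the partition of sizes, in nonincreasing order, of the maximal runs of consecutive integers in $I$. $G$ is harmonic if $|G_I|=|G_J|$ whenever $I,J\subseteq[m]$ have the same run decomposition. A set of integers is nonconsecutive if no two distinct elements differ by exactly $1$. *)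

From mathcomp Require Import all_boot all_order.
Set Implicit Arguments. Unset Strict Implicit. Unset Printing Implicit Defensive.

(* A set system G = (U, (A_1,...,A_m)) is represented by a ground set
   U : {set T} (T a finType) and A : 'I_m -> {set T}; the ordinal i : 'I_m
   stands for the index (val i).+1 in [m] = {1,...,m}. *)

Definition Gsys (T : finType) (m : nat) (U : {set T}) (A : 'I_m -> {set T})
  (I1 I2 : {set 'I_m}) : {set T} :=
  U :&: (\bigcap_(i in I1) A i) :&: (\bigcap_(i in I2) (U :\: A i)).

Definition idx (m : nat) (I : {set 'I_m}) : seq nat := [seq (val i).+1 | i <- enum I].

Definition run_length (I : seq nat) (x : nat) : nat :=
  find (fun k => x + k \notin I) (iota 0 (size I).+1).

Definition run_start (I : seq nat) (x : nat) : bool :=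
  (x \in I) && ~~ ((0 < x) && (x.-1 \in I)).

Definition run_decomp (I : seq nat) : seq nat :=
  sort geq [seq run_length I x | x <- undup I & run_start I x].

Definition harmonic (T : finType) (m : nat) (U : {set T}) (A : 'I_m -> {set T}) : Prop :=
  forall I J : {set 'I_m}, run_decomp (idx I) = run_decomp (idx J) ->
    #|Gsys U A I set0| = #|Gsys U A J set0|.

Definition nonconsecutive (m : nat) (I : {set 'I_m}) : Prop :=
  forall i j, i \in I -> j \in I -> val i <> (val j).+1.

(* Let S y = [set i | y \in A i] be the trace of a point. Harmonicity makes the number of y with
   I \subset S y depend only on #|I| when I is nonconsecutive, so by inclusion-exclusion the number
   of y with S y :&: P = T, for P nonconsecutive and T \subset P, depends only on #|P| and #|T|.
   A trace meeting a nonconsecutive set in three points and missing three others can therefore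
   be moved onto the even indices, which would give |U| >= C(m/2, 3) >= m (m - 2). Testing this
   on the even indices, and on a triple together with the even indices far from it, shows that
   every trace or its complement has at most 4 elements and contains no nonconsecutive triple.
   Let U^(1) be the points with small traces. On U^(2) the counts agree with those of U for
   #|I| >= 5, and the alternating sum over any 5-set F vanishes since every trace meets F;
   choosing F far from I, a downward induction on #|I| shows that U^(2), hence also U^(1), is
   harmonic. *)

From mathcomp Require Import all_boot all_order all_algebra.
From mathcomp Require Import zify.
Set Implicit Arguments. Unset Strict Implicit. Unset Printing Implicit Defensive.
Import GRing.Theory Num.Theory.

Section Runs.
Implicit Types s t : seq nat.

Lemma run_length_spec s x : uniq s ->
  [/\ run_length s x <= size s, x + run_length s x \notin s &
      forall k, k < run_length s x -> x + k \in s].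
Proof.
move=> us.
have hasx : has (fun k => x + k \notin s) (iota 0 (size s).+1).
  apply/negPn/negP => /hasPn allin.
  have sub : {subset iota x (size s).+1 <= s}.
    move=> z; rewrite mem_iota => /andP[xz zx].
    have := allin (z - x); rewrite mem_iota subnKC // => /(_ ltac:(lia)).
    by move/negbNE.
  by have := uniq_leq_size (iota_uniq x (size s).+1) sub; rewrite size_iota ltnn.
have lt := hasx; rewrite has_find size_iota in lt.
rewrite /run_length; split=> //.
- by have := nth_find 0 hasx; rewrite nth_iota.
- move=> k hk; have := before_find 0 hk.
  by rewrite nth_iota ?(ltn_trans hk) //= => /negbFE.
Qed.

Lemma run_length_eq s x r : uniq s -> x + r \notin s ->
  (forall k, k < r -> x + k \in s) -> run_length s x = r.
Proof.
move=> us out inr; have [_ out' inr'] := run_length_spec x us.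
case: (ltngtP (run_length s x) r) => // lt.
- by move: (inr _ lt); rewrite (negbTE out').
- by move: (inr' _ lt); rewrite (negbTE out).
Qed.

Lemma run_length_perm s t : perm_eq s t -> run_length s =1 run_length t.
Proof.
by move=> st x; rewrite /run_length (perm_size st); apply: eq_find => k; rewrite (perm_mem st).
Qed.

Lemma run_start_perm s t : perm_eq s t -> run_start s =1 run_start t.
Proof. by move=> st x; rewrite /run_start !(perm_mem st). Qed.

Definition run_lengths s := [seq run_length s x | x <- undup s & run_start s x].

Lemma run_decomp_eqP s t :
  run_decomp s = run_decomp t <-> perm_eq (run_lengths s) (run_lengths t).
Proof.
have geq_total : total geq by move=> a b; apply: leq_total.
have geq_trans : transitive geq by move=> a b c /= ba cb; apply: leq_trans cb ba.
have geq_anti : antisymmetric geq by move=> a b /= /andP[ba ab]; apply/anti_leq/andP.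
by split=> /(perm_sortP geq_total geq_trans geq_anti).
Qed.

Lemma run_lengths_perm s t : perm_eq s t -> perm_eq (run_lengths s) (run_lengths t).
Proof.
move=> st; rewrite /run_lengths (eq_map (run_length_perm st)).
rewrite (eq_filter (run_start_perm st)).
exact/perm_map/perm_filter/perm_undup/perm_mem.
Qed.

Definition separated s t := {in s & t, forall a b, (a.+1 < b) || (b.+1 < a)}.

Lemma separated_sym s t : separated s t -> separated t s.
Proof. by move=> st b a bt as_; rewrite orbC st. Qed.

Lemma run_separated s s1 s2 x : uniq s -> uniq s1 -> separated s1 s2 ->
  s =i s1 ++ s2 -> x \in s1 ->
  run_start s x = run_start s1 x /\ run_length s x = run_length s1 x.
Proof.
move=> us us1 sep ms xs1; split.
  rewrite /run_start ms mem_cat xs1; case: x xs1 => //= x xs1.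
  have x2 : x \notin s2 by apply/negP => /(sep _ _ xs1); lia.
  by rewrite ms mem_cat (negbTE x2) orbF.
have [_ out inr] := run_length_spec x us1.
have r_gt0 : 0 < run_length s1 x by move: out; case: run_length; rewrite ?addn0 ?xs1.
apply: run_length_eq => // [|k lt]; last by rewrite ms mem_cat inr.
have last1 := inr (run_length s1 x).-1 ltac:(lia).
by rewrite ms mem_cat negb_or out /=; apply/negP => /(sep _ _ last1); lia.
Qed.

Lemma run_lengths_separated s s1 s2 : uniq s -> uniq s1 -> separated s1 s2 -> s =i s1 ++ s2 ->
  [seq run_length s x | x <- s1 & run_start s x] = run_lengths s1.
Proof.
move=> us us1 sep ms; rewrite /run_lengths (undup_id us1).
rewrite (eq_in_filter (fun x xs1 => (run_separated us us1 sep ms xs1).1)).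
by apply/eq_in_map => x; rewrite mem_filter => /andP[_ /(run_separated us us1 sep ms)[]].
Qed.

Lemma run_lengths_cat s1 s2 : uniq (s1 ++ s2) -> separated s1 s2 ->
  run_lengths (s1 ++ s2) = run_lengths s1 ++ run_lengths s2.
Proof.
move=> u12 sep; move: (u12); rewrite cat_uniq => /and3P[us1 _ us2].
rewrite {1}/run_lengths (undup_id u12) filter_cat map_cat.
rewrite (run_lengths_separated u12 us1 sep) //.
rewrite (run_lengths_separated u12 us2 (separated_sym sep)) //.
by move=> z; rewrite !mem_cat orbC.
Qed.

Definition in_run s x z := run_start s x && (x <= z < x + run_length s x).

Lemma count_run s x : uniq s ->
  count (fun z => x <= z < x + run_length s x) s = run_length s x.
Proof.
move=> us; have [_ _ inr] := run_length_spec x us.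
rewrite -size_filter -[RHS](size_iota x); apply/perm_size/uniq_perm.
- exact: filter_uniq.
- exact: iota_uniq.
move=> z; rewrite mem_filter mem_iota; case: (boolP (x <= z < _)) => //= zr.
by have := inr (z - x) ltac:(lia); rewrite subnKC //; lia.
Qed.

Lemma in_run_inj s z x1 x2 : uniq s -> in_run s x1 z -> in_run s x2 z -> x1 = x2.
Proof.
move=> us; wlog le12 : x1 x2 / x1 <= x2.
  by move=> wlog r1 r2; case: (leqP x1 x2) => [|/ltnW] le; [|symmetry]; apply: wlog.
move=> /andP[_ r1] /andP[/andP[_ start2] r2]; apply/eqP; rewrite eqn_leq le12 /=.
apply: contraNT start2; rewrite -ltnNge => lt12.
have [_ _ inr] := run_length_spec x1 us.
by have := inr (x2.-1 - x1) ltac:(lia); rewrite subnKC ?(ltn_predK lt12) //; lia.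
Qed.

Lemma count_in_run s z : uniq s -> z \in s -> count (in_run s ^~ z) s = 1.
Proof.
move=> us zs.
pose reach x := (x <= z) && all (mem s) (iota x (z - x).+1).
have reach_z : exists x, reach x by exists z; rewrite /reach leqnn subnn /= zs.
case: (ex_minnP reach_z) => x0 /andP[x0z all0] min0.
have inrun : forall k, x0 <= k <= z -> k \in s.
  by move=> k kz; apply: (allP all0); rewrite mem_iota; lia.
have x0s : x0 \in s by apply: inrun; lia.
have run0 : in_run s x0 z.
  rewrite /in_run /run_start x0s x0z /=; apply/andP; split.
    apply/negP => /andP[x0_gt0 predx0].
    suff /min0 : reach x0.-1 by lia.
    apply/andP; split; first lia.
    apply/allP => k; rewrite mem_iota => kz.
    by case: (eqVneq k x0.-1) => [-> // | ne]; apply: inrun; lia.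
  have [_ out _] := run_length_spec x0 us.
  by rewrite ltnNge; apply: contra out => ?; apply: inrun; lia.
transitivity (count_mem x0 s); last by rewrite count_uniq_mem ?x0s.
apply: eq_in_count => x _ /=.
by apply/idP/eqP => [/(in_run_inj us)/(_ run0)|->].
Qed.

Lemma sumn_run_lengths s : uniq s -> sumn (run_lengths s) = size s.
Proof.
move=> us; rewrite /run_lengths (undup_id us) sumnE big_map big_filter.
under eq_bigr => x _ do rewrite -(count_run x us) -sum1_count big_mkcond.
rewrite exchange_big /= -sum1_size big_seq [RHS]big_seq; apply: eq_bigr => z zs.
by rewrite -big_mkcondr sum1_count count_in_run.
Qed.

Lemma run_lengths_isolated s : uniq s -> {in s, forall x, x.+1 \notin s} ->
  run_lengths s = nseq (size s) 1.
Proof.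
move=> us iso; rewrite /run_lengths (undup_id us).
have -> : [seq x <- s | run_start s x] = s.
  rewrite -[RHS]filter_predT; apply: eq_in_filter => x xs; rewrite /run_start xs.
  by case: x xs => //= x; apply: contraL => /iso.
have -> : nseq (size s) 1 = [seq 1 | _ <- s] by elim: (s) => //= x t <-.
apply/eq_in_map => x xs; apply: run_length_eq => // [|[|k] //]; first by rewrite addn1 iso.
by rewrite addn0.
Qed.

End Runs.

Section IndexSets.
Variable m : nat.
Implicit Types I J F P X Y B : {set 'I_m}.

Lemma idx_uniq I : uniq (idx I).
Proof. by rewrite map_inj_uniq ?enum_uniq // => i j [/val_inj]. Qed.

Lemma size_idx I : size (idx I) = #|I|.
Proof. by rewrite size_map cardE. Qed.

Lemma mem_idxP I n : reflect (exists2 i : 'I_m, i \in I & n = i.+1) (n \in idx I).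
Proof. by apply: (iffP mapP) => -[i]; rewrite ?mem_enum; exists i; rewrite ?mem_enum. Qed.

Lemma idx_setU I F : [disjoint I & F] -> perm_eq (idx (I :|: F)) (idx I ++ idx F).
Proof.
move=> dIF; rewrite /idx -map_cat; apply/perm_map/uniq_perm; rewrite ?enum_uniq //.
  rewrite cat_uniq !enum_uniq andbT /=; apply/hasPn => i; rewrite !mem_enum => iF.
  by apply: contraL dIF => iI; apply/pred0Pn; exists i; rewrite /= iI.
by move=> i; rewrite mem_cat !mem_enum inE.
Qed.

Definition nbhd X : {set 'I_m} := [set i : 'I_m | [exists j in X, (i <= j.+1) && (j <= i.+1)]].

Lemma sub_nbhd X : X \subset nbhd X.
Proof. by apply/subsetP => i iX; rewrite inE; apply/existsP; exists i; rewrite iX /=; lia. Qed.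

Lemma nbhdS X Y : X \subset Y -> nbhd X \subset nbhd Y.
Proof.
move=> /subsetP XY; apply/subsetP => i; rewrite !inE => /exists_inP[j /XY jY near].
by apply/exists_inP; exists j.
Qed.

Lemma notin_nbhd I i j : i \in I -> j \notin nbhd I -> (i.+1 < j) || (j.+1 < i).
Proof. by move=> iI; rewrite inE => /exists_inPn/(_ i iI); rewrite negb_and -!ltnNge. Qed.

Lemma nat_of_insubd (j : 'I_m) k : k < m -> nat_of_ord (insubd j k) = k.
Proof. by move=> km; rewrite /= val_insubd km. Qed.

Lemma card_nbhd X : #|nbhd X| <= 3 * #|X|.
Proof.
pose shift (d : nat -> nat) (j : 'I_m) := insubd j (d j).
have sub : nbhd X \subset X :|: shift succn @: X :|: shift predn @: X.
  apply/subsetP => i; rewrite inE => /exists_inP[j jX /andP[ij ji]].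
  have [jm im] := (ltn_ord j, ltn_ord i).
  rewrite !inE; case: (ltngtP i j) => [lt|gt|/ord_inj-> ]; last by rewrite jX.
    apply/orP; right; apply/imsetP; exists j => //.
    by apply: ord_inj; rewrite nat_of_insubd; lia.
  apply/orP; left; apply/orP; right; apply/imsetP; exists j => //.
  by apply: ord_inj; rewrite nat_of_insubd; lia.
apply: leq_trans (subset_leq_card sub) _; rewrite !mulSn mul0n addn0 addnA.
apply: leq_trans (leq_card_setU _ _) (leq_add _ (leq_imset_card _ _)).
exact: leq_trans (leq_card_setU _ _) (leq_add (leqnn _) (leq_imset_card _ _)).
Qed.

Lemma separated_idx I F : [disjoint nbhd I & F] -> separated (idx I) (idx F).
Proof.
move=> dIF _ _ /mem_idxP[i iI ->] /mem_idxP[f fF ->].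
have fN : f \notin nbhd I by apply: contraL dIF => fN; apply/pred0Pn; exists f; rewrite /= fN.
exact: notin_nbhd iI fN.
Qed.

Lemma disjoint_nbhd I F : [disjoint nbhd I & F] -> [disjoint I & F].
Proof. by apply/disjointWl/sub_nbhd. Qed.

Definition run_invariant (c : {set 'I_m} -> nat) :=
  forall I J, run_decomp (idx I) = run_decomp (idx J) -> c I = c J.

Lemma run_decomp_card I J : run_decomp (idx I) = run_decomp (idx J) -> #|I| = #|J|.
Proof. by move/run_decomp_eqP/perm_sumn; rewrite !sumn_run_lengths ?idx_uniq ?size_idx. Qed.

Lemma run_decomp_setU I J F : [disjoint nbhd I & F] -> [disjoint nbhd J & F] ->
  run_decomp (idx I) = run_decomp (idx J) ->
  run_decomp (idx (I :|: F)) = run_decomp (idx (J :|: F)).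
Proof.
move=> dI dJ /run_decomp_eqP IJ; apply/run_decomp_eqP.
have runsU K : [disjoint nbhd K & F] ->
    perm_eq (run_lengths (idx (K :|: F))) (run_lengths (idx K) ++ run_lengths (idx F)).
  move=> dK; have pK := idx_setU (disjoint_nbhd dK).
  rewrite -run_lengths_cat; first exact: run_lengths_perm.
    by rewrite -(perm_uniq pK) idx_uniq.
  exact: separated_idx.
apply: perm_trans (runsU I dI) _; rewrite perm_sym; apply: perm_trans (runsU J dJ) _.
by rewrite perm_cat2r perm_sym.
Qed.

Lemma run_decomp_nonconsecutive I J : nonconsecutive I -> nonconsecutive J ->
  #|I| = #|J| -> run_decomp (idx I) = run_decomp (idx J).
Proof.
have iso (K : {set 'I_m}) : nonconsecutive K -> run_lengths (idx K) = nseq #|K| 1.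
  move=> nK; rewrite -size_idx run_lengths_isolated ?idx_uniq //.
  move=> _ /mem_idxP[i iI ->]; apply/mem_idxP => -[j jI [/esym]].
  exact: nK.
by move=> nI nJ IJ; apply/run_decomp_eqP; rewrite !iso // IJ.
Qed.

End IndexSets.

Lemma exists_subset_card (T : finType) (X : {set T}) k : k <= #|X| ->
  exists2 Y : {set T}, Y \subset X & #|Y| = k.
Proof.
rewrite -(bin_gt0 _ k) -cards_draws card_gt0 => /set0Pn[Y].
by rewrite inE => /andP[YX /eqP]; exists Y.
Qed.

Section Nonconsecutive.
Variable m : nat.
Implicit Types I P X Y B : {set 'I_m}.

(* [lia] understands the coercion [nat_of_ord] but not [val]. *)
Lemma nonconsecutiveE X :
  nonconsecutive X <-> {in X &, forall i j : 'I_m, nat_of_ord i <> j.+1}.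
Proof. by []. Qed.

Lemma nonconsecutiveP X :
  reflect (nonconsecutive X) [forall i in X, forall j in X, val i != (val j).+1].
Proof.
apply: (iffP forall_inP) => [nX i j iX jX | nX i iX].
  by apply/eqP; move/forall_inP: (nX i iX); apply.
by apply/forall_inP => j jX; apply/eqP/nX.
Qed.

Lemma nonconsecutiveS X Y : nonconsecutive X -> Y \subset X -> nonconsecutive Y.
Proof. by move=> nX /subsetP YX i j /YX iX /YX jX; apply: nX. Qed.

Lemma nonconsecutiveU_nbhd I X : nonconsecutive I -> nonconsecutive X ->
  nonconsecutive (I :|: (X :\: nbhd I)).
Proof.
move=> nI nX; apply/nonconsecutiveE => i j; rewrite !in_setU !in_setD.
case/orP=> [iI|/andP[iN iX]] /orP[jI|/andP[jN jX]].
- exact: nI.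
- by have := notin_nbhd iI jN; lia.
- by have := notin_nbhd jI iN; lia.
- exact: nX.
Qed.

Definition evens : {set 'I_m} := [set i : 'I_m | ~~ odd i].
Definition odds : {set 'I_m} := ~: evens.

Lemma card_evens : #|evens| = m - m./2.
Proof.
have count_odd n : count odd (iota 0 n) = n./2.
  by elim: n => // n IH; rewrite -addn1 iotaD count_cat IH /=; lia.
have -> : #|evens| = count (predC odd) (iota 0 m).
  by rewrite cardsE cardE /enum_mem size_filter -val_enum_ord count_map enumT.
by have := count_predC odd (iota 0 m); rewrite size_iota count_odd; lia.
Qed.

Lemma nonconsecutive_evens : nonconsecutive evens.
Proof. by apply/nonconsecutiveE => i j; rewrite !inE => ei ej eij; rewrite eij /= ej in ei. Qed.

Lemma nonconsecutive_odds : nonconsecutive odds.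
Proof.
by apply/nonconsecutiveE => i j; rewrite !inE !negbK => oi oj eij; rewrite eij /= oj in oi.
Qed.

Definition splits P B := [/\ nonconsecutive P, 3 <= #|P :&: B| & 3 <= #|P :\: B|].

Definition triple_free B := forall I, #|I| = 3 -> nonconsecutive I -> I \subset B -> False.

Lemma splitsC P B : splits P (~: B) <-> splits P B.
Proof. by rewrite /splits setDE setCK -setDE; split=> -[]. Qed.

Lemma splits_triple X B I : nonconsecutive X -> 12 <= #|X :\: B| ->
  #|I| = 3 -> nonconsecutive I -> I \subset B -> splits (I :|: (X :\: nbhd I)) B.
Proof.
move=> nX XB cI nI IB; split; first exact: nonconsecutiveU_nbhd.
  by rewrite -cI; apply/subset_leq_card; rewrite subsetI subsetUl.
have far : (X :\: B) :\: nbhd I \subset (I :|: (X :\: nbhd I)) :\: B.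
  apply/subsetP => i; rewrite !in_setD in_setU in_setD => /andP[iN /andP[iB iX]].
  by rewrite iB iN iX orbT.
apply: leq_trans (subset_leq_card far); rewrite cardsD.
by have := card_nbhd I; have := subset_leq_card (subsetIr (X :\: B) (nbhd I)); lia.
Qed.

Lemma splits_six P B : splits P B -> exists2 S, nonconsecutive S /\ #|S| = 6 & #|B :&: S| = 3.
Proof.
move=> [nP PB PnB].
have [T1 T1PB cT1] := exists_subset_card PB.
have [R RPnB cR] := exists_subset_card PnB.
move: T1PB RPnB; rewrite subsetI subsetD => /andP[T1P T1B] /andP[RP RnB].
exists (T1 :|: R); last by rewrite setIUr (setIidPr T1B) setIC (disjoint_setI0 RnB) setU0.
split; first by apply: nonconsecutiveS nP _; rewrite subUset T1P.
rewrite cardsU cT1 cR (disjoint_setI0 (disjointWl T1B _)) ?cards0 //.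
by rewrite disjoint_sym.
Qed.

Lemma triple_free_odds B : triple_free B -> #|odds :&: B| <= 2.
Proof.
rewrite leqNgt => tf; apply/negP => /exists_subset_card[I]; rewrite subsetI => /andP[Iodd IB] cI.
exact: tf cI (nonconsecutiveS nonconsecutive_odds Iodd) IB.
Qed.

Lemma triple_free_card B : triple_free B -> #|evens :&: B| <= 2 -> #|B| <= 4.
Proof.
move=> /triple_free_odds; rewrite /odds => oddsB evensB.
by have := cardsID evens B; rewrite setDE !(setIC B); lia.
Qed.

Lemma unsplittable_dichotomy B : 27 <= m -> (forall P, ~ splits P B) ->
  (#|B| <= 4 /\ triple_free B) \/ (#|~: B| <= 4 /\ triple_free (~: B)).
Proof.
move=> m_ge27.
have side C : (forall P, ~ splits P C) -> #|evens :&: C| <= 2 -> #|C| <= 4 /\ triple_free C.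
  move=> unsplit EC; suff tf : triple_free C by split; first exact: triple_free_card.
  move=> I cI nI IC; apply: unsplit (splits_triple nonconsecutive_evens _ cI nI IC).
  by have := cardsID C evens; rewrite card_evens; lia.
move=> unsplit; have [EB|EB] : #|evens :&: B| <= 2 \/ #|evens :\: B| <= 2.
  case: (leqP #|evens :&: B| 2) => [|EB]; [by left | right].
  rewrite leqNgt; apply/negP => EB'.
  by apply: (unsplit evens); split=> //; exact: nonconsecutive_evens.
- by left; apply: side.
- right; apply: side; last by rewrite -setDE.
  by move=> P /splitsC; apply: unsplit.
Qed.

End Nonconsecutive.

Arguments nonconsecutive_evens {m}.

Lemma leq_bin_half n a b : a <= b -> b.*2 <= n -> 'C(n, a) <= 'C(n, b).
Proof.
elim: b => [|b IH] ab bn; first by move: ab; rewrite leqn0 => /eqP->.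
case: (ltngtP a b.+1) ab => // [lt|->] _ //.
apply: leq_trans (IH lt ltac:(lia)) _.
by rewrite -(leq_pmul2l (ltn0Sn b)) mul_bin_left leq_mul2r; apply/orP; right; lia.
Qed.

Lemma bin3_le n k : 3 <= k -> k + 3 <= n -> 'C(n, 3) <= 'C(n, k).
Proof.
move=> k3 kn; case: (leqP k.*2 n) => [|half]; first exact: leq_bin_half.
by rewrite -[X in _ <= X]bin_sub ?leq_bin_half //; lia.
Qed.

Lemma quadratic_le_bin3 n m : 26 <= n -> m <= n.*2 -> m * (m - 2) <= 'C(n, 3).
Proof.
move=> n26 mn.
have e : 'C(n, 3) * 6 = n * (n - 1) * (n - 2).
  by rewrite -[6]/(3`!) bin_ffact !ffactnSr ffactn0 mul1n subn0.
have m_le : m * (m - 2) <= 4 * (n * (n - 1)).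
  apply: leq_trans (_ : n.*2 * (n.*2 - 2) <= _); first by apply: leq_mul; lia.
  have -> : n.*2 - 2 = (n - 1).*2 by lia.
  by rewrite -!mul2n mulnACA.
have big : 24 * (n * (n - 1)) <= n * (n - 1) * (n - 2) by rewrite mulnC leq_mul2l; lia.
lia.
Qed.

Section SubsetSums.
Variable T : finType.
Local Open Scope ring_scope.

Lemma sum_subsets_card (R : nmodType) (X : {set T}) (F : nat -> R) :
  \sum_(K : {set T} | K \subset X) F #|K| = \sum_(k < #|X|.+1) F k *+ 'C(#|X|, k).
Proof.
rewrite (partition_big (fun K : {set T} => inord #|K| : 'I_#|X|.+1) xpredT) //=.
apply: eq_bigr => k _; rewrite -cards_draws -sumr_const.
apply: eq_big => K; last by move=> /andP[KX /eqP <-]; rewrite inordK // ltnS subset_leq_card.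
rewrite inE; case: (boolP (K \subset X)) => //= KX.
by rewrite -(inj_eq val_inj) /= inordK // ltnS subset_leq_card.
Qed.

Lemma sum_subsets_sign (R : comPzRingType) (X : {set T}) :
  \sum_(K : {set T} | K \subset X) (-1) ^+ #|K| = (X == set0)%:R :> R.
Proof.
have := exprDn (1 : R) (-1) #|X|; rewrite addrN expr0n cards_eq0 => ->.
by rewrite sum_subsets_card; apply: eq_bigr => k _; rewrite expr1n mul1r.
Qed.

End SubsetSums.

Lemma run_invariant_sieve m k (c f : {set 'I_m} -> nat) :
  k + 6 * k.-1 <= m -> run_invariant f -> (forall I : {set 'I_m}, k <= #|I| -> c I = f I) ->
  (forall I F : {set 'I_m}, #|F| = k ->
     \sum_(K : {set 'I_m} | K \subset F) ((-1) ^+ #|K| * (c (I :|: K))%:R : int) = 0)%R ->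
  run_invariant c.
Proof.
(* Downward induction on |I|: for a k-set F far from I and J, the vanishing alternating sum
   expresses c I through the c (I :|: K), K nonempty, which are known by induction. *)
move=> room finv cf vanish.
suff ind n (I J : {set 'I_m}) : #|I| = #|J| -> run_decomp (idx I) = run_decomp (idx J) ->
    k <= #|I| + n -> c I = c J.
  by move=> I J IJ; apply: (ind k) => //; [exact: run_decomp_card | lia].
elim: n I J => [|n IH] I J cIJ rIJ big.
  by rewrite addn0 in big; rewrite !cf -?cIJ //; apply: finv.
have [|lt] := leqP k (#|I| + n); first exact: IH.
pose X := I :|: J.
have cX : #|X| <= 2 * k.-1 by apply: leq_trans (leq_card_setU I J) _; lia.
have [F FX cF] : exists2 F : {set 'I_m}, F \subset ~: nbhd X & #|F| = k.
  apply: exists_subset_card; have := card_nbhd X; have := cardsC (nbhd X).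
  rewrite card_ord; lia.
have key (K : {set 'I_m}) : K \subset F -> K != set0 -> c (I :|: K) = c (J :|: K).
  move=> KF K0; have KX : [disjoint nbhd X & K].
    by rewrite disjoint_sym disjoints_subset (subset_trans KF FX).
  have [KI KJ] : [disjoint nbhd I & K] /\ [disjoint nbhd J & K].
    by split; apply: disjointWl KX; apply/nbhdS; rewrite ?subsetUl ?subsetUr.
  have cK : 0 < #|K| by rewrite card_gt0.
  apply: IH; last by rewrite cardsU (disjoint_setI0 (disjoint_nbhd KI)) cards0; lia.
    by rewrite !cardsU (disjoint_setI0 (disjoint_nbhd KI)) (disjoint_setI0 (disjoint_nbhd KJ)) cIJ.
  exact: run_decomp_setU.
have peel (I0 : {set 'I_m}) : ((c I0)%:R = - \sum_(K : {set 'I_m} | (K \subset F) && (K != set0))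
    (-1) ^+ #|K| * (c (I0 :|: K))%:R :> int)%R.
  have := vanish I0 F cF; rewrite (bigD1 set0) ?sub0set //= cards0 setU0 expr0 mul1r.
  by move/eqP; rewrite addr_eq0 => /eqP.
apply/eqP; rewrite -(@eqr_nat int) !peel; apply/eqP; congr (- _)%R.
by apply: eq_bigr => K /andP[KF K0]; rewrite key.
Qed.

Lemma setI_eq_disjoint (T : finType) (S P Q : {set T}) : Q \subset P ->
  (S :&: P == Q) = (Q \subset S) && [disjoint P :\: Q & S].
Proof.
move=> /subsetP QP; rewrite -setI_eq0; apply/eqP/andP => [<-|[/subsetP QS /eqP/setP dis]].
  split; first exact: subsetIl.
  by apply/eqP/setP => i; rewrite !inE; case: (i \in S); case: (i \in P).
apply/setP => i; rewrite inE; case: (boolP (i \in Q)) => iQ; first by rewrite QS ?QP.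
by move: (dis i); rewrite !inE iQ andbC.
Qed.

Section SetSystem.
Variables (T : finType) (m : nat) (A : 'I_m -> {set T}).
Implicit Types (V : {set T}) (I F : {set 'I_m}).
Local Open Scope ring_scope.

Definition trace (y : T) : {set 'I_m} := [set i | y \in A i].

Definition above V I : {set T} := [set y in V | I \subset trace y].

Lemma Gsys_above V I : Gsys V A I set0 = above V I.
Proof.
apply/setP => y; rewrite /Gsys big_set0 setIT !inE; congr (_ && _).
by apply/bigcapP/subsetP => sub i /sub; rewrite inE.
Qed.

Lemma Gsys_restrict_above V I : Gsys V (fun i => A i :&: V) I set0 = above V I.
Proof.
apply/setP => y; rewrite /Gsys big_set0 setIT !inE; case: (boolP (y \in V)) => //= yV.
by apply/bigcapP/subsetP => sub i /sub; rewrite !inE ?yV ?andbT.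
Qed.

Lemma Gsys_restrict_below V I :
  Gsys V (fun i => A i :&: V) set0 I = [set y in V | I \subset ~: trace y].
Proof.
apply/setP => y; rewrite /Gsys big_set0 setIT !inE; case: (boolP (y \in V)) => //= yV.
by apply/bigcapP/subsetP => sub i /sub; rewrite !inE ?yV ?andbT.
Qed.

Lemma card_set_sum V (p : pred T) : #|[set y in V | p y]|%:R = \sum_(y in V) (p y)%:R :> int.
Proof.
rewrite -sum1_card natr_sum (eq_bigl [predI V & p]) => [|y]; last by rewrite !inE.
by rewrite big_mkcondr; apply: eq_bigr => y _; rewrite unfold_in; case: (p y).
Qed.

Lemma sieve_above V I F :
  \sum_(K : {set 'I_m} | K \subset F) (-1) ^+ #|K| * #|above V (I :|: K)|%:R =
  #|[set y in V | (I \subset trace y) && [disjoint F & trace y]]|%:R :> int.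
Proof.
rewrite card_set_sum; under eq_bigr do rewrite card_set_sum mulr_sumr.
rewrite exchange_big /=; apply: eq_bigr => y _.
case: (boolP (I \subset trace y)) => /= Itr; last first.
  by rewrite big1 // => K _; rewrite subUset (negbTE Itr) mulr0.
under eq_bigr do rewrite subUset Itr mulr_natr mulrb.
rewrite -big_mkcondr -(eq_bigl _ _ (fun K => subsetI K F (trace y))).
by rewrite sum_subsets_sign setI_eq0.
Qed.

End SetSystem.

Section HarmonicSystem.
Variables (T : finType) (m : nat) (U : {set T}) (A : 'I_m -> {set T}).
Hypothesis harm : run_invariant (fun I => #|above A U I|).
Implicit Types (I F P Q R : {set 'I_m}).
Local Notation trace := (trace A).
Local Notation above := (above A).

Lemma above_nonconsecutive :
  exists a : nat -> nat, forall I, nonconsecutive I -> #|above U I| = a #|I|.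
Proof.
pose a k := if [pick J : {set 'I_m} | (#|J| == k) &&
                 [forall i in J, forall j in J, val i != (val j).+1]]
  is Some J then #|above U J| else 0.
exists a => I nI; rewrite /a; case: pickP => [J /andP[/eqP cJ /nonconsecutiveP nJ] | none].
  by apply: harm; apply: run_decomp_nonconsecutive.
by have := none I; rewrite eqxx; move/nonconsecutiveP: nI => ->.
Qed.

Definition pattern P (T1 : {set 'I_m}) := [set y in U | trace y :&: P == T1].

Lemma card_pattern_sieve P (T1 : {set 'I_m}) : T1 \subset P ->
  (#|pattern P T1|%:R =
   \sum_(K : {set 'I_m} | K \subset P :\: T1) (-1) ^+ #|K| * #|above U (T1 :|: K)|%:R :> int)%R.
Proof.
move=> T1P; rewrite sieve_above; congr (_%:R)%R; apply: eq_card => y.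
by rewrite !inE setI_eq_disjoint.
Qed.

Lemma card_pattern_eq P Q (T1 T2 : {set 'I_m}) :
  nonconsecutive P -> nonconsecutive Q -> T1 \subset P -> T2 \subset Q ->
  #|P| = #|Q| -> #|T1| = #|T2| -> #|pattern P T1| = #|pattern Q T2|.
Proof.
move=> nP nQ T1P T2Q cPQ cT; have [a aE] := above_nonconsecutive.
have sieve R (T0 : {set 'I_m}) : nonconsecutive R -> T0 \subset R ->
    (#|pattern R T0|%:R = \sum_(k < #|R :\: T0|.+1)
       ((-1) ^+ k * (a (#|T0| + k))%:R) *+ 'C(#|R :\: T0|, k) :> int)%R.
  move=> nR T0R; rewrite card_pattern_sieve //.
  rewrite -(sum_subsets_card _ (fun k => (-1) ^+ k * (a (#|T0| + k))%:R))%R.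
  apply: eq_bigr => K; rewrite subsetD disjoint_sym => /andP[KR T0K].
  rewrite aE ?cardsU ?(disjoint_setI0 T0K) ?cards0 ?subn0 //.
  by apply: nonconsecutiveS nR _; rewrite subUset T0R.
apply/eqP; rewrite -(@eqr_nat int) !sieve //.
by rewrite !cardsD (setIidPr T1P) (setIidPr T2Q) cPQ cT.
Qed.

Lemma pattern_transfer P Q (T2 : {set 'I_m}) y :
  nonconsecutive P -> nonconsecutive Q -> T2 \subset Q -> #|P| = #|Q| ->
  #|trace y :&: P| = #|T2| -> y \in U -> exists2 z, z \in U & trace z :&: Q = T2.
Proof.
move=> nP nQ T2Q cPQ cT yU.
have : 0 < #|pattern Q T2|.
  rewrite -(card_pattern_eq nP nQ (subsetIr _ _) T2Q cPQ cT) card_gt0.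
  by apply/set0Pn; exists y; rewrite inE yU eqxx.
by rewrite card_gt0 => /set0Pn[z]; rewrite inE => /andP[zU /eqP]; exists z.
Qed.

Lemma bin_trace_le_card P y : nonconsecutive P -> y \in U ->
  'C(#|P|, #|trace y :&: P|) <= #|U|.
Proof.
move=> nP yU; rewrite -cards_draws.
apply: leq_trans (leq_imset_card (fun z => trace z :&: P) U); apply/subset_leq_card.
apply/subsetP => X; rewrite inE => /andP[XP /eqP cX].
by have [z zU <-] := pattern_transfer nP nP XP erefl (esym cX) yU; apply/imsetP; exists z.
Qed.

Hypothesis small : #|U| < m * (m - 2).
Hypothesis m_ge51 : 51 <= m.

(* The pattern of y is transferred to the even indices, where it forces C(|evens|, 3) <= |U|. *)
Lemma trace_unsplittable P y : y \in U -> ~ splits P (trace y).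
Proof.
move=> yU /splits_six[S [nS cS] cSy].
have [E26 E2] : 26 <= #|evens m| /\ m <= (#|evens m|).*2 by rewrite card_evens; lia.
have [Q QE cQ] := exists_subset_card (leq_trans (isT : 6 <= 26) E26).
have Q3 : 3 <= #|Q| by rewrite cQ.
have [T2 T2Q cT2] := exists_subset_card Q3.
have cSQ : #|S| = #|Q| by rewrite cS cQ.
have cT : #|trace y :&: S| = #|T2| by rewrite cSy cT2.
have nQ := nonconsecutiveS nonconsecutive_evens QE.
have [z zU trz] := pattern_transfer nS nQ T2Q cSQ cT yU.
have lo : 3 <= #|trace z :&: evens m|.
  by rewrite -cT2 -trz; apply/subset_leq_card/setIS.
have hi : #|trace z :&: evens m| + 3 <= #|evens m|.
  rewrite -(cardsID (trace z) (evens m)) setIC leq_add2l.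
  have : Q :\: T2 \subset evens m :\: trace z by rewrite -trz setDIr setDv setU0 setSD.
  by move/subset_leq_card; rewrite cardsD (setIidPr T2Q) cQ cT2.
have := bin_trace_le_card nonconsecutive_evens zU.
by rewrite leqNgt (leq_trans small (leq_trans (quadratic_le_bin3 E26 E2) (bin3_le lo hi))).
Qed.

Lemma trace_dichotomy y : y \in U ->
  (#|trace y| <= 4 /\ triple_free (trace y)) \/ (#|~: trace y| <= 4 /\ triple_free (~: trace y)).
Proof.
move=> yU; apply: unsplittable_dichotomy; first exact: leq_trans m_ge51.
by move=> P; exact: trace_unsplittable.
Qed.

Definition thin : {set T} := [set y | #|trace y| <= 4].
Definition low := U :&: thin.
Definition high := U :\: thin.

Lemma low_triple_free y : y \in low -> triple_free (trace y).
Proof.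
rewrite !inE => /andP[yU small_y].
have [[] //|[cosmall _]] := trace_dichotomy yU.
by have := cardsC (trace y); rewrite card_ord; lia.
Qed.

Lemma high_cotrace y : y \in high -> #|~: trace y| <= 4 /\ triple_free (~: trace y).
Proof.
rewrite !inE -ltnNge => /andP[big yU].
have [[small_y _] | //] := trace_dichotomy yU.
by rewrite leqNgt big in small_y.
Qed.

Lemma card_above_low_high I : #|above low I| + #|above high I| = #|above U I|.
Proof.
rewrite -(cardsID thin (above U I)); congr (_ + _); apply: eq_card => y; rewrite !inE.
  by rewrite andbAC.
by rewrite andbA.
Qed.

Lemma above_high I : 5 <= #|I| -> above high I = above U I.
Proof.
move=> cI; apply/setP => y; rewrite !inE.
case: (boolP (I \subset trace y)) => [sub|]; last by rewrite !andbF.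
by rewrite !andbT -ltnNge (leq_trans cI (subset_leq_card sub)).
Qed.

Lemma sieve_high I F : #|F| = 5 ->
  (\sum_(K : {set 'I_m} | K \subset F) ((-1) ^+ #|K| * #|above high (I :|: K)|%:R : int) = 0)%R.
Proof.
move=> cF; rewrite sieve_above; apply/eqP; rewrite pnatr_eq0 cards_eq0; apply/eqP/setP => y.
rewrite inE in_set0; apply/negP => /and3P[yH _ dis].
have [cosmall _] := high_cotrace yH.
have FC : F \subset ~: trace y by rewrite -disjoints_subset.
by have := subset_leq_card FC; rewrite cF; lia.
Qed.

Lemma run_invariant_high : run_invariant (fun I => #|above high I|).
Proof.
apply: (@run_invariant_sieve _ 5 _ _ _ harm) => [|I /above_high -> //|I F /sieve_high //].
exact: leq_trans m_ge51.
Qed.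

Lemma run_invariant_low : run_invariant (fun I => #|above low I|).
Proof.
move=> I J IJ; apply/eqP; rewrite -(eqn_add2r #|above high I|) {2}(run_invariant_high IJ).
by rewrite !card_above_low_high (harm IJ).
Qed.

Lemma above_low_triple I : #|I| = 3 -> nonconsecutive I -> above low I = set0.
Proof.
move=> cI nI; apply/setP => y; rewrite inE in_set0; apply/negP => /andP[/low_triple_free tf].
exact: tf.
Qed.

Lemma below_high_triple I : #|I| = 3 -> nonconsecutive I ->
  [set y in high | I \subset ~: trace y] = set0.
Proof.
move=> cI nI; apply/setP => y; rewrite inE in_set0; apply/negP => /andP[/high_cotrace[_ tf]].
exact: tf.
Qed.

End HarmonicSystem.

Theorem lemma4p25 (T : finType) (m : nat) (U : {set T}) (A : 'I_m -> {set T}) :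
  (forall i, A i \subset U) ->
  harmonic U A ->
  #|U| < m * (m - 2) ->
  51 <= m ->
  exists U1 U2 : {set T},
    [/\ U1 :|: U2 = U, [disjoint U1 & U2],
        harmonic U1 (fun i => A i :&: U1),
        harmonic U2 (fun i => A i :&: U2) &
        forall I : {set 'I_m}, #|I| = 3 -> nonconsecutive I ->
          Gsys U1 (fun i => A i :&: U1) I set0 = set0 /\
          Gsys U2 (fun i => A i :&: U2) set0 I = set0].
Proof.
move=> _ harmG small m_ge51.
have harm : run_invariant (fun I => #|above A U I|) by move=> I J /harmG; rewrite !Gsys_above.
exists (low U A), (high U A); split.
- exact: setID.
- by rewrite /low /high -setI_eq0 setDE setIACA setICr setI0.
- by move=> I J /(run_invariant_low harm small m_ge51); rewrite !Gsys_restrict_above.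
- by move=> I J /(run_invariant_high harm small m_ge51); rewrite !Gsys_restrict_above.
move=> I cI nI; rewrite Gsys_restrict_above Gsys_restrict_below.
by rewrite (above_low_triple harm small m_ge51) ?(below_high_triple harm small m_ge51).
Qed.
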